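(* Let $G=(V,E)$ be an intersecting hypergraph and $c\colon V\to\{0,1\}$ a colouring such that every $c$-monochromatic hitting set for $G$ has size at least $h$, where $h>r(G)$. Then there exist a partial function $f\colon\{0,1\}^V\to\{0,1,*\}$ and an input $x\in f^{-1}( * )$ such that $\mathrm{C}(f)\le r(G)$ and $\min\{\mathrm{C}_{\bar 0}(f,x),\mathrm{C}_{\bar 1}(f,x)\}\ge h$. Moreover $f$ can be taken monotone, in the sense that flipping any input bit from $0$ to $1$ never changes the value from $1$ to $0$ or $*$, nor from $*$ to $0$.
   Context: A hypergraph $G=(V,E)$ is intersecting if $e\cap e'\neq\emptyset$ for all $e,e'\in E$. A set $U\subseteq V$ is a hitting set if it intersects every edge; it is $c$-monochromatic if $c$ is constant on $U$. The rank $r(G)$ is the maximum edge size. For a partial function $f\colon\{0,1\}^V\to\{0,1,*\}$: a partial input $\rho\in\{0,1,*\}^V$ is consistent with $x$ if $\rho_v=x_v$ whenever $\rho_v\neq*$; $|\rho|$ is the number of non-$*$ entries; for $\Sigma\subseteq\{0,1,*\}$, $\rho$ is a $\Sigma$-certificate for $x$ if it is consistent with $x$ and $f(x')\in\Sigma$ for all $x'$ consistent with $\rho$; $\mathrm{C}_\Sigma(f,x)$ is the least size of such a certificate, $\mathrm{C}_\Sigma(f)=\max_{x\in f^{-1}(\Sigma)}\mathrm{C}_\Sigma(f,x)$; $0,1,\bar0,\bar1$ denote $\Sigma=\{0\},\{1\},\{1,*\},\{0,*\}$; $\mathrm{C}(f)=\max\{\mathrm{C}_0(f),\mathrm{C}_1(f)\}$.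 *)

From mathcomp Require Import all_boot.
Set Implicit Arguments. Unset Strict Implicit. Unset Printing Implicit Defensive.

Section Defs.
Variable V : finType.

Definition intersecting (E : {set {set V}}) : Prop :=
  forall e e', e \in E -> e' \in E -> e :&: e' != set0.

Definition hitting_set (E : {set {set V}}) (U : {set V}) : Prop :=
  forall e, e \in E -> U :&: e != set0.

Definition monochromatic (c : V -> bool) (U : {set V}) : Prop :=
  exists b : bool, forall v, v \in U -> c v = b.

Definition hrank (E : {set {set V}}) : nat := \max_(e in E) #|e|.

(* Inputs x in {0,1}^V; outputs in {0,1,*} encoded as option bool:
   Some false = 0, Some true = 1, None = *. *)
Definition input := {ffun V -> bool}.
Definition pfun := input -> option bool.
(* partial inputs: None = * *)
Definition pinput := {ffun V -> option bool}.

Definition consistent (rho : pinput) (x : input) : bool :=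
  [forall v, if rho v is Some b then x v == b else true].

Definition psize (rho : pinput) : nat := #|[set v | rho v != None]|.

Definition is_cert (f : pfun) (S : pred (option bool)) (rho : pinput) (x : input) : bool :=
  consistent rho x && [forall x' : input, consistent rho x' ==> S (f x')].

(* C_S(f,x): least size of an S-certificate for x (default #|V| if none,
   which only happens when f x \notin S). *)
Definition Cx (f : pfun) (S : pred (option bool)) (x : input) : nat :=
  \big[minn/#|V|]_(rho : pinput | is_cert f S rho x) psize rho.

Definition Cf (f : pfun) (S : pred (option bool)) : nat :=
  \max_(x : input | S (f x)) Cx f S x.

Definition S0 : pred (option bool) := fun o => o == Some false.
Definition S1 : pred (option bool) := fun o => o == Some true.
Definition Sbar0 : pred (option bool) := fun o => o != Some false.
Definition Sbar1 : pred (option bool) := fun o => o != Some true.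

Definition Ccert (f : pfun) : nat := maxn (Cf f S0) (Cf f S1).

Definition out_rank (o : option bool) : nat :=
  match o with Some false => 0 | None => 1 | Some true => 2 end.

Definition flip_on (x : input) (v : V) : input :=
  [ffun u => if u == v then true else x u].

Definition monotone_pfun (f : pfun) : Prop :=
  forall (x : input) (v : V), x v = false ->
    out_rank (f x) <= out_rank (f (flip_on x v)).
End Defs.

From mathcomp Require Import all_boot.
Set Implicit Arguments. Unset Strict Implicit. Unset Printing Implicit Defensive.

(* Let f be the "edge function" of E: f x = 1 if x is constantly 1
   on some edge, f x = 0 if x is constantly 0 on some edge, and f x = * otherwise.
   Since E is intersecting, no input is constant 1 on one edge and constant 0 on
   another, so f is well defined; it is plainly monotone.  Every x with f x = b
   has the b-certificate "x restricted to an edge", so C(f) <= r(G).  At the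
   colouring x = c itself: an edge is a c-monochromatic hitting set, hence has
   size >= h > r(G), which is impossible, so f c = *.  Finally, from a
   {not b}-certificate rho for c, the coordinates where rho reads (not b) form a
   c-monochromatic hitting set: an edge missing them could be filled with b,
   giving an input consistent with rho on which f = b.  So every such
   certificate has size >= h, and so has the minimal one. *)

Section Certificates.
Variable V : finType.

Definition reveal (x : input V) (A : {set V}) : pinput V :=
  [ffun v => if v \in A then Some (x v) else None].

Lemma psize_reveal (x : input V) (A : {set V}) : psize (reveal x A) = #|A|.
Proof. by apply: eq_card => v; rewrite inE ffunE; case: (v \in A). Qed.

Lemma consistent_reveal (x : input V) (A : {set V}) : consistent (reveal x A) x.
Proof. by apply/forallP => v; rewrite ffunE; case: (v \in A). Qed.

Lemma Cx_le_cert (f : pfun V) (S : pred (option bool)) (x : input V) (rho : pinput V) :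
  is_cert f S rho x -> Cx f S x <= psize rho.
Proof.
(* minn with default #|V| is not a monoid, so we induct over the enumeration. *)
move=> cert; rewrite /Cx.
have : rho \in index_enum (pinput V) by rewrite mem_index_enum.
elim: (index_enum _) => // rho' r IH; rewrite inE big_cons => /orP[/eqP <-|in_r].
  by rewrite cert geq_minl.
by case: ifP => _; rewrite ?(leq_trans (geq_minr _ _)) ?IH.
Qed.

(* A lower bound valid for every certificate of x bounds C_S(f,x) from below;
   the hypothesis S (f x) makes the full input a certificate, so the default
   value #|V| of the minimum is also large enough. *)
Lemma Cx_ge_cert (f : pfun V) (S : pred (option bool)) (x : input V) (h : nat) :
  S (f x) -> (forall rho, is_cert f S rho x -> h <= psize rho) -> h <= Cx f S x.
Proof.
move=> Sfx lb; rewrite /Cx; apply: (big_ind (fun n => h <= n)) => //.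
- have full_cert : is_cert f S (reveal x setT) x.
    rewrite /is_cert consistent_reveal; apply/forallP => x'; apply/implyP.
    move=> /forallP cons; suff -> : x' = x by [].
    by apply/ffunP => v; have := cons v; rewrite ffunE in_setT => /eqP.
  by rewrite -cardsT -(psize_reveal x); exact: lb.
- by move=> m n hm hn; rewrite leq_min hm hn.
Qed.

End Certificates.

Section EdgeFunction.
Variable V : finType.
Variable E : {set {set V}}.
Hypothesis intE : intersecting E.

Definition const_on (b : bool) (x : input V) (e : {set V}) : bool :=
  [forall v in e, x v == b].

Definition edge_fun : pfun V := fun x =>
  if [exists e in E, const_on true x e] then Some true
  else if [exists e in E, const_on false x e] then Some false else None.

Lemma const_on_edges b b' (x : input V) e e' :
  e \in E -> e' \in E -> const_on b x e -> const_on b' x e' -> b = b'.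
Proof.
move=> eE e'E /forallP xe /forallP xe'.
have [|[u]] := set_0Vmem (e :&: e'); first by move/eqP; rewrite (negbTE (intE eE e'E)).
rewrite inE => /andP[ue ue'].
by move: (xe u) (xe' u); rewrite ue ue' /= => /eqP -> /eqP.
Qed.

Lemma edge_fun_const b x e : e \in E -> const_on b x e -> edge_fun x = Some b.
Proof.
move=> eE xe; rewrite /edge_fun.
case: existsP => [[e' /andP[e'E xe']]|noT]; first by rewrite (const_on_edges eE e'E xe xe').
case: b xe => xe; first by case: noT; exists e; rewrite eE.
by case: existsP => // -[]; exists e; rewrite eE.
Qed.

Lemma edge_fun_SomeP b x : edge_fun x = Some b -> exists2 e, e \in E & const_on b x e.
Proof.
rewrite /edge_fun; case: existsP => [[e /andP[eE xe]] [<-]|_]; first by exists e.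
by case: existsP => [[e /andP[eE xe]] [<-]|_ //]; exists e.
Qed.

(* Revealing x on an edge where it is constant certifies the value of f. *)
Lemma Cf_edge_fun b : Cf edge_fun (fun o => o == Some b) <= hrank E.
Proof.
apply/bigmax_leqP => x /eqP fx; have [e eE xe] := edge_fun_SomeP fx.
have cert : is_cert edge_fun (fun o => o == Some b) (reveal x e) x.
  rewrite /is_cert consistent_reveal; apply/forallP => x'; apply/implyP.
  move=> /forallP cons; apply/eqP/(edge_fun_const eE)/forallP => v.
  apply/implyP => ve; move: (cons v) (forallP xe v).
  by rewrite ffunE ve => /eqP ->.
apply: leq_trans (Cx_le_cert cert) _.
by rewrite psize_reveal; exact: leq_bigmax_cond.
Qed.

Lemma edge_fun_mono (x y : input V) :
  (forall u, x u -> y u) -> out_rank (edge_fun x) <= out_rank (edge_fun y).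
Proof.
move=> xy.
have up e : const_on true x e -> const_on true y e.
  by move=> /forallP xe; apply/forallP => u; apply/implyP => /(implyP (xe u)) /eqP /xy ->.
have down e : const_on false y e -> const_on false x e.
  move=> /forallP ye; apply/forallP => u; apply/implyP => /(implyP (ye u)).
  by case: (x u) (xy u) => // ->.
case fx: (edge_fun x) => [[]|].
- by have [e eE /up ye] := edge_fun_SomeP fx; rewrite (edge_fun_const eE ye).
- by case: (edge_fun y) => [[]|].
case fy: (edge_fun y) => [[]|] //.
have [e eE /down xe] := edge_fun_SomeP fy.
by rewrite (edge_fun_const eE xe) in fx.
Qed.

Lemma edge_fun_monotone : monotone_pfun edge_fun.
Proof.
by move=> x v _; apply: edge_fun_mono => u; rewrite ffunE; case: (u == v).
Qed.

Variable c : V -> bool.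
Variable h : nat.
Hypothesis mono_hitting_large :
  forall U : {set V}, hitting_set E U -> monochromatic c U -> h <= #|U|.

Definition colouring : input V := [ffun v => c v].

Lemma edge_hitting e : e \in E -> hitting_set E e.
Proof. by move=> eE e' e'E; apply: intE. Qed.

Lemma const_on_mono b U : const_on b colouring U -> monochromatic c U.
Proof. by move=> /forallP cU; exists b => v vU; move: (cU v); rewrite vU ffunE => /eqP. Qed.

(* Edges are too small to be monochromatic hitting sets, so f c = *. *)
Lemma edge_fun_colouring : hrank E < h -> edge_fun colouring = None.
Proof.
move=> rank_lt; have noconst b : ~~ [exists e in E, const_on b colouring e].
  apply/existsP => -[e /andP[eE ce]].
  have := mono_hitting_large (edge_hitting eE) (const_on_mono ce).
  by move/(leq_trans rank_lt); rewrite ltnNge leq_bigmax_cond.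
by rewrite /edge_fun (negbTE (noconst true)) (negbTE (noconst false)).
Qed.

Definition fill (rho : pinput V) (b : bool) : input V :=
  [ffun v => if rho v is Some a then a else b].

(* The coordinates where a {not b}-certificate of c reads (not b) form a
   monochromatic hitting set, so every such certificate has size >= h. *)
Lemma cert_colouring_large b (rho : pinput V) :
  is_cert edge_fun (fun o => o != Some b) rho colouring -> h <= psize rho.
Proof.
move=> /andP[/forallP cons_c /forallP cert].
pose U := [set v | rho v == Some (~~ b)].
have U_hitting : hitting_set E U.
  move=> e eE; apply/negP => /eqP avoid.
  have fill_const : const_on b (fill rho b) e.
    apply/forallP => v; apply/implyP => ve.
    have : v \notin U :&: e by rewrite avoid inE.
    rewrite !inE ve andbT ffunE; case: (rho v) => [a|] //=.
    by case: a; case: (b).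
  move: (cert (fill rho b)); rewrite (edge_fun_const eE fill_const) eqxx implybF.
  by move/negP; apply; apply/forallP => v; rewrite ffunE; case: (rho v).
have U_mono : monochromatic c U.
  by exists (~~ b) => v; rewrite inE => /eqP rv; move: (cons_c v); rewrite rv ffunE => /eqP.
apply: leq_trans (mono_hitting_large U_hitting U_mono) _.
by apply/subset_leq_card/subsetP => v; rewrite !inE => /eqP ->.
Qed.

End EdgeFunction.

Theorem theorem2p2 (V : finType) (E : {set {set V}}) (c : V -> bool) (h : nat) :
  intersecting E ->
  (forall U : {set V}, hitting_set E U -> monochromatic c U -> h <= #|U|) ->
  hrank E < h ->
  exists (f : pfun V) (x : input V),
    [/\ f x = None,
        Ccert f <= hrank E,
        h <= minn (Cx f (@Sbar0) x) (Cx f (@Sbar1) x)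
      & monotone_pfun f].
Proof.
move=> intE large rank_lt.
have f_star := edge_fun_colouring intE large rank_lt.
have lb b : h <= Cx (edge_fun E) (fun o => o != Some b) (colouring c).
  by apply: Cx_ge_cert; [rewrite f_star | exact: cert_colouring_large].
exists (edge_fun E), (colouring c); split => //.
- by rewrite geq_max !Cf_edge_fun.
- by rewrite leq_min (lb false) (lb true).
exact: edge_fun_monotone.
Qed.
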